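(* The functor $\mathbf F:\mathbf{PA}\to\mathbf{DRC}$, $P\mapsto\mathbb F(P)$, is a left adjoint to the forgetful functor $\mathbf P:\mathbf{DRC}\to\mathbf{PA}$, $S\mapsto\mathbf P(S)$, and $\mathbf{PA}$ is coreflective in $\mathbf{DRC}$.
   Context: Maps are written on the right and composed left to right. A projection algebra is a set $P$ with maps $\theta_p,\delta_p:P\to P$ ($p\in P$) such that for all $p,q$: $p\theta_p=p$, $p\delta_p=p$; $p\theta_{q\theta_p}=q\theta_p$, $p\delta_{q\delta_p}=q\delta_p$; $\theta_q\theta_{q\theta_p}=\theta_q\theta_p$, $\delta_q\delta_{q\delta_p}=\delta_q\delta_p$; $\theta_p\delta_p=\theta_p$, $\delta_p\theta_p=\delta_p$; $\theta_{p\delta_q}\theta_p=\theta_q\theta_p$, $\delta_{p\theta_q}\delta_p=\delta_q\delta_p$. A projection algebra morphism $\phi$ satisfies $(q\theta_p)\phi=(q\phi)\theta_{p\phi}$ and $(q\delta_p)\phi=(q\phi)\delta_{p\phi}$; $\mathbf{PA}$ is the category of projection algebras. Write $p\,\mathscr F\,q$ iff $p=q\delta_p$ and $q=p\theta_q$. A DRC-semigroup is $(S,\cdot,D,R)$, $(S,\cdot)$ a semigroup, $D,R:S\to S$ with, for all $a,b$: $D(a)a=a$, $aR(a)=a$; $D(ab)=D(aD(b))$, $R(ab)=R(R(a)b)$; $D(ab)=D(a)D(ab)D(a)$, $R(ab)=R(b)R(ab)R(b)$; $R(D(a))=D(a)$, $D(R(a))=R(a)$. $\mathbf{DRC}$ is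 the category of DRC-semigroups with maps preserving $\cdot,D,R$. The forgetful functor $\mathbf P$ sends $S$ to $\mathbf P(S)=\{D(a):a\in S\}$ with $q\theta_p=R(qp)$, $q\delta_p=D(pq)$, and a DRC-morphism to its restriction to projections. $\mathbb F(P)$ is the semigroup with presentation on generators $x_p$ ($p\in P$) and relations $x_p^2=x_p$, $x_px_q=x_px_{p\theta_q}$, $x_px_q=x_{q\delta_p}x_q$ ($p,q\in P$); $\overline w$ denotes the class of a word $w$. Every element equals $\overline{x_{p_1}\cdots x_{p_k}}$ for some $p_1\mathscr F p_2\mathscr F\cdots\mathscr F p_k$, and $p_1,p_k$ are determined by the element; $D$ and $R$ on $\mathbb F(P)$ are given by $D(\overline{x_{p_1}\cdots x_{p_k}})=\overline{x_{p_1}}$, $R(\overline{x_{p_1}\cdots x_{p_k}})=\overline{x_{p_k}}$, making $\mathbb F(P)$ a DRC-semigroup whose projection algebra is identified with $P$ via $p\leftrightarrow\overline{x_p}$. For a projection algebra morphism $\phi:P\to P'$, $\mathbf F(\phi):\mathbb F(P)\to\mathbb F(P')$ is the DRC-morphism $\overline w\mapsto\overline{w'}$ where $w'$ replaces each $x_p$ by $x_{p\phi}$. *)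

From Stdlib Require Import List Relations ClassicalEpsilon.
Import ListNotations.
Set Implicit Arguments.

(** Projection algebras.  Maps are written on the right:
    [theta q p] stands for  q θ_p  and  [delta q p] for  q δ_p. *)
Record PAops := { pa_car :> Type;
                  theta : pa_car -> pa_car -> pa_car;
                  delta : pa_car -> pa_car -> pa_car }.
Arguments theta {_} _ _.
Arguments delta {_} _ _.

Definition is_PA (P : PAops) : Prop :=
  forall p q : P,
    theta p p = p /\ delta p p = p /\
    theta p (theta q p) = theta q p /\
    delta p (delta q p) = delta q p /\
    (* θ_q θ_{qθ_p} = θ_q θ_p, applied to r (left-to-right composition) *)
    (forall r, theta (theta r q) (theta q p) = theta (theta r q) p) /\
    (forall r, delta (delta r q) (delta q p) = delta (delta r q) p) /\
    (forall r, delta (theta r p) p = theta r p) /\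
    (forall r, theta (delta r p) p = delta r p) /\
    (forall r, theta (theta r (delta p q)) p = theta (theta r q) p) /\
    (forall r, delta (delta r (theta p q)) p = delta (delta r q) p).

Definition pa_hom (P Q : PAops) (phi : P -> Q) : Prop :=
  forall p q : P, phi (theta q p) = theta (phi q) (phi p) /\
                  phi (delta q p) = delta (phi q) (phi p).

Record DRCops := { drc_car :> Type;
                   mul : drc_car -> drc_car -> drc_car;
                   opD : drc_car -> drc_car;
                   opR : drc_car -> drc_car }.
Arguments mul {_} _ _.
Arguments opD {_} _.
Arguments opR {_} _.

Definition is_DRC (S : DRCops) : Prop :=
  (forall a b c : S, mul (mul a b) c = mul a (mul b c)) /\
  forall a b : S,
    mul (opD a) a = a /\ mul a (opR a) = a /\
    opD (mul a b) = opD (mul a (opD b)) /\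
    opR (mul a b) = opR (mul (opR a) b) /\
    opD (mul a b) = mul (mul (opD a) (opD (mul a b))) (opD a) /\
    opR (mul a b) = mul (mul (opR b) (opR (mul a b))) (opR b) /\
    opR (opD a) = opD a /\ opD (opR a) = opR a.

Definition drc_hom (S T : DRCops) (f : S -> T) : Prop :=
  forall a b : S, f (mul a b) = mul (f a) (f b) /\
                  f (opD a) = opD (f a) /\ f (opR a) = opR (f a).

(** The projections P(S) = { D(a) : a ∈ S } of S, with q θ_p = R(qp), q δ_p = D(pq). *)
Definition is_proj (S : DRCops) (x : S) : Prop := exists a : S, opD a = x.

(** [f : P -> S] is a projection-algebra morphism P -> P(S)
    (its values lie in P(S) and it preserves θ and δ of P(S)). *)
Definition pa_hom_to_P (P : PAops) (S : DRCops) (f : P -> S) : Prop :=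
  (forall p, is_proj S (f p)) /\
  forall p q : P, f (theta q p) = opR (mul (f q) (f p)) /\
                  f (delta q p) = opD (mul (f p) (f q)).

Section Free.
Variable P : PAops.

Inductive step : list P -> list P -> Prop :=
| st_idem  l r p   : step (l ++ p :: p :: r) (l ++ p :: r)
| st_theta l r p q : step (l ++ p :: q :: r) (l ++ p :: theta p q :: r)
| st_delta l r p q : step (l ++ p :: q :: r) (l ++ delta q p :: q :: r).

Definition weq : list P -> list P -> Prop := clos_refl_sym_trans _ step.

(* a nonempty word is a pair (first letter, rest) *)
Definition word := (P * list P)%type.
Definition wlist (w : word) : list P := fst w :: snd w.

Record Fcar := { fcls : list P -> Prop;
                 fcls_ok : exists w : word, fcls = weq (wlist w) }.

Definition cls (w : word) : Fcar :=
  {| fcls := weq (wlist w); fcls_ok := ex_intro _ w eq_refl |}.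

Definition rep (a : Fcar) : word :=
  proj1_sig (constructive_indefinite_description _ (fcls_ok a)).

Definition Fmul (a b : Fcar) : Fcar :=
  cls (fst (rep a), snd (rep a) ++ wlist (rep b)).

Definition Frel (p q : P) : Prop := p = delta q p /\ q = theta p q.

Fixpoint chain (p : P) (l : list P) : Prop :=
  match l with [] => True | q :: l' => Frel p q /\ chain q l' end.

Definition chain_rep (a : Fcar) : word :=
  epsilon (inhabits (rep a)) (fun w => chain (fst w) (snd w) /\ fcls a (wlist w)).

Definition xgen (p : P) : Fcar := cls (p, []).

Definition FD (a : Fcar) : Fcar := xgen (fst (chain_rep a)).
Definition FR (a : Fcar) : Fcar := xgen (last (snd (chain_rep a)) (fst (chain_rep a))).

Definition FreeDRC : DRCops := {| drc_car := Fcar; mul := Fmul; opD := FD; opR := FR |}.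

(* unit: p |-> class of x_p  (identification P = P(F(P))) *)
Definition eta (p : P) : FreeDRC := xgen p.
End Free.

Definition Fmor (P Q : PAops) (phi : P -> Q) (a : FreeDRC P) : FreeDRC Q :=
  cls (phi (fst (rep a)), map phi (snd (rep a))).
Arguments Fmor {P Q} phi a.
Arguments eta {P} p.

(* A word x_{p1}⋯x_{pk} has two invariants under the defining relations of F(P):
   the letter pk δ_{p(k-1)} ⋯ δ_{p1} (a right fold) and the letter p1 θ_{p2} ⋯ θ_{pk}
   (a left fold).  A θ-pass from the left followed by a δ-pass from the right rewrites
   every word into an F-chain, on which the two folds return the first and the last
   letter; so D and R of F(P) are computed by the folds, which gives the DRC axioms and
   shows that p ↦ x_p is a bijection onto the projections.  For a projection-algebra
   morphism f : P → P(S) the product f(p1)⋯f(pk) is invariant in the same way, and it is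
   the unique DRC-morphism extending f; F on morphisms is the extension of η ∘ φ. *)

From Stdlib Require Import List Relations Setoid Morphisms ClassicalEpsilon
  FunctionalExtensionality PropExtensionality ProofIrrelevance.
Import ListNotations.
Set Implicit Arguments.
Unset Strict Implicit.

Section DRCSemigroup.
Variable S : DRCops.
Hypothesis HS : is_DRC S.
Implicit Types a b x y : S.

Lemma mulA a b (c : S) : mul (mul a b) c = mul a (mul b c).  Proof. apply HS. Qed.
Lemma mul_D a : mul (opD a) a = a.                          Proof. apply (proj2 HS a a). Qed.
Lemma mul_R a : mul a (opR a) = a.                          Proof. apply (proj2 HS a a). Qed.
Lemma D_mulD a b : opD (mul a b) = opD (mul a (opD b)).     Proof. apply (proj2 HS a b). Qed.
Lemma R_Rmul a b : opR (mul a b) = opR (mul (opR a) b).     Proof. apply (proj2 HS a b). Qed.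
Lemma D_mul_sandwich a b : opD (mul a b) = mul (mul (opD a) (opD (mul a b))) (opD a).
Proof. apply (proj2 HS a b). Qed.
Lemma R_mul_sandwich a b : opR (mul a b) = mul (mul (opR b) (opR (mul a b))) (opR b).
Proof. apply (proj2 HS a b). Qed.
Lemma R_D a : opR (opD a) = opD a.                          Proof. apply (proj2 HS a a). Qed.
Lemma D_R a : opD (opR a) = opR a.                          Proof. apply (proj2 HS a a). Qed.

Lemma proj_R x : is_proj S x -> opR x = x.
Proof. intros [a <-]. apply R_D. Qed.

Lemma proj_D x : is_proj S x -> opD x = x.
Proof. intros [a <-]. rewrite <- (R_D a) at 1. rewrite D_R. apply R_D. Qed.

Lemma proj_idem x : is_proj S x -> mul x x = x.
Proof. intros Hx. rewrite <- (proj_D Hx) at 1. apply mul_D. Qed.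

Lemma proj_mul_R x y : is_proj S y -> mul x (opR (mul x y)) = mul x y.
Proof.
  intros Hy. rewrite R_mul_sandwich, (proj_R Hy), <- !mulA, mul_R, mulA.
  now rewrite (proj_idem Hy).
Qed.

Lemma proj_D_mul x y : is_proj S x -> mul (opD (mul x y)) y = mul x y.
Proof.
  intros Hx. rewrite D_mul_sandwich, (proj_D Hx), !mulA, mul_D, <- mulA.
  now rewrite (proj_idem Hx).
Qed.

End DRCSemigroup.

Section FreeSemigroup.
Variable P : PAops.
Hypothesis HP : is_PA P.
Implicit Types p q r x y z e : P.

Lemma theta_diag p : theta p p = p.                          Proof. apply (HP p p). Qed.
Lemma delta_diag p : delta p p = p.                          Proof. apply (HP p p). Qed.
Lemma theta_absorb p q : theta p (theta q p) = theta q p.    Proof. apply (HP p q). Qed.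
Lemma delta_absorb p q : delta p (delta q p) = delta q p.    Proof. apply (HP p q). Qed.
Lemma theta_theta_comp p q r : theta (theta r q) (theta q p) = theta (theta r q) p.
Proof. apply (HP p q). Qed.
Lemma delta_delta_comp p q r : delta (delta r q) (delta q p) = delta (delta r q) p.
Proof. apply (HP p q). Qed.
Lemma delta_theta p r : delta (theta r p) p = theta r p.     Proof. apply (HP p p). Qed.
Lemma theta_delta p r : theta (delta r p) p = delta r p.     Proof. apply (HP p p). Qed.
Lemma theta_theta_delta p q r : theta (theta r (delta p q)) p = theta (theta r q) p.
Proof. apply (HP p q). Qed.
Lemma delta_delta_theta p q r : delta (delta r (theta p q)) p = delta (delta r q) p.
Proof. apply (HP p q). Qed.

Lemma theta_idem p r : theta (theta r p) p = theta r p.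
Proof. rewrite <- (delta_theta p r) at 1. rewrite theta_delta. apply delta_theta. Qed.

Lemma delta_idem p r : delta (delta r p) p = delta r p.
Proof. rewrite <- (theta_delta p r) at 1. rewrite delta_theta. apply theta_delta. Qed.

Lemma theta_theta_self p q : theta p (theta p q) = theta p q.
Proof. pose proof (theta_theta_comp q p p) as H. now rewrite theta_diag in H. Qed.

Lemma delta_delta_self p q : delta p (delta p q) = delta p q.
Proof. pose proof (delta_delta_comp q p p) as H. now rewrite delta_diag in H. Qed.

Lemma theta_absorb_delta p q : theta p (delta q p) = delta q p.
Proof. rewrite <- (theta_delta p q). apply theta_absorb. Qed.

Lemma delta_absorb_theta p q : delta p (theta q p) = theta q p.
Proof. rewrite <- (delta_theta p q). apply delta_absorb. Qed.

Lemma theta_delta_shift p q : theta (delta q p) q = theta p q.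
Proof.
  pose proof (theta_theta_delta q p p) as H.
  now rewrite theta_diag, theta_absorb_delta in H.
Qed.

Lemma delta_theta_shift p q : delta (theta p q) p = delta q p.
Proof.
  pose proof (delta_delta_theta p q q) as H.
  now rewrite delta_diag, delta_absorb_theta in H.
Qed.

Lemma theta_delta_below e e' g :
  theta e e' = e' -> theta g e' = g -> delta g e' = g -> theta (delta g e) g = g.
Proof.
  intros Hee' Hg Hg'.
  assert (He'g : theta e' g = g) by (rewrite <- Hg at 1; now rewrite theta_absorb).
  assert (Heg : theta e g = g).
  { rewrite <- (theta_idem g e). rewrite <- Hg' at 1.
    now rewrite theta_theta_delta, Hee'. }
  now rewrite <- (theta_absorb_delta e g), theta_theta_delta, theta_diag.
Qed.


Local Notation "u ≡ v" := (weq P u v) (at level 70, no associativity).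

#[local] Instance weq_Equivalence : Equivalence (weq P).
Proof. split; red; [apply rst_refl | apply rst_sym | apply rst_trans]. Qed.

Lemma weq_lift (h : list P -> list P) :
  (forall u v, step P u v -> step P (h u) (h v)) -> forall u v, u ≡ v -> h u ≡ h v.
Proof.
  intros Hh u v. induction 1 as [u v Huv| |u v _ IH|u v w _ IH1 _ IH2].
  - apply rst_step, Hh, Huv.
  - reflexivity.
  - symmetry; exact IH.
  - etransitivity; [exact IH1 | exact IH2].
Qed.

#[local] Instance app_weq : Proper (weq P ==> weq P ==> weq P) (@app P).
Proof.
  intros u u' Hu v v' Hv. transitivity (u' ++ v).
  - apply (weq_lift (h := fun w => w ++ v)); [|exact Hu].
    intros ? ? []; rewrite <- !app_assoc; constructor.
  - apply (weq_lift (h := app u')); [|exact Hv].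
    intros ? ? []; rewrite !app_assoc; constructor.
Qed.

#[local] Instance cons_weq : Proper (eq ==> weq P ==> weq P) (@cons P).
Proof. intros x ? <- u v H. exact (app_weq (reflexivity [x]) H). Qed.

Lemma weq_idem p l : p :: p :: l ≡ p :: l.
Proof. apply rst_step, (st_idem P [] l). Qed.
Lemma weq_theta p q l : p :: q :: l ≡ p :: theta p q :: l.
Proof. apply rst_step, (st_theta P [] l). Qed.
Lemma weq_delta p q l : p :: q :: l ≡ delta q p :: q :: l.
Proof. apply rst_step, (st_delta P [] l). Qed.

Lemma fold_right_weq (A : Type) (c : P -> A -> A) (a0 : A) :
  (forall p a, c p (c p a) = c p a) ->
  (forall p q a, c p (c q a) = c p (c (theta p q) a)) ->
  (forall p q a, c p (c q a) = c (delta q p) (c q a)) ->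
  forall u v, u ≡ v -> fold_right c a0 u = fold_right c a0 v.
Proof.
  intros Hidem Htheta Hdelta u v.
  induction 1 as [u v Huv| | |]; [|reflexivity|congruence|congruence].
  destruct Huv; rewrite !fold_right_app; cbn; f_equal; auto.
Qed.

Lemma fold_left_weq (A : Type) (c : A -> P -> A) (a0 : A) :
  (forall a p, c (c a p) p = c a p) ->
  (forall a p q, c (c a p) q = c (c a p) (theta p q)) ->
  (forall a p q, c (c a p) q = c (c a (delta q p)) q) ->
  forall u v, u ≡ v -> fold_left c u a0 = fold_left c v a0.
Proof.
  intros Hidem Htheta Hdelta u v.
  induction 1 as [u v Huv| | |]; [|reflexivity|congruence|congruence].
  destruct Huv; rewrite !fold_left_app; cbn; f_equal; auto.
Qed.

Fixpoint wordD x l : P :=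
  match l with [] => x | y :: l' => delta (wordD y l') x end.

Definition wordR x l : P := fold_left (@theta P) l x.

(* [step] acts on all lists, but D and R only exist on nonempty words: the empty list
   is sent to [None]. *)
Definition dact x (s : option P) : option P :=
  Some (match s with None => x | Some d => delta d x end).

Definition ract (s : option P) x : option P :=
  Some (match s with None => x | Some d => theta d x end).

Lemma fold_dact x l : fold_right dact None (x :: l) = Some (wordD x l).
Proof.
  induction l as [|y l IH] in x |- *; [reflexivity|].
  exact (f_equal (dact x) (IH y)).
Qed.

Lemma fold_ract x l : fold_left ract (x :: l) None = Some (wordR x l).
Proof. induction l as [|y l IH] in x |- *; [reflexivity|]. apply IH. Qed.

Lemma wordD_weq x l y m : x :: l ≡ y :: m -> wordD x l = wordD y m.
Proof.
  intros H. enough (Some (wordD x l) = Some (wordD y m)) by congruence.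
  rewrite <- !fold_dact. apply fold_right_weq; [| | |exact H];
    intros p; [|intros q..]; intros [d|]; unfold dact; f_equal.
  - apply delta_idem.
  - apply delta_diag.
  - symmetry; apply delta_delta_theta.
  - symmetry; apply delta_theta_shift.
  - symmetry; apply delta_delta_comp.
  - symmetry; apply delta_delta_self.
Qed.

Lemma wordR_weq x l y m : x :: l ≡ y :: m -> wordR x l = wordR y m.
Proof.
  intros H. enough (Some (wordR x l) = Some (wordR y m)) by congruence.
  rewrite <- !fold_ract. apply fold_left_weq; [| | |exact H];
    intros [d|] p; [| |intros q..]; unfold ract; f_equal.
  - apply theta_idem.
  - apply theta_diag.
  - symmetry; apply theta_theta_comp.
  - symmetry; apply theta_theta_self.
  - symmetry; apply theta_theta_delta.
  - symmetry; apply theta_delta_shift.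
Qed.


Fixpoint theta_pass x l : list P :=
  match l with [] => [] | q :: l' => theta x q :: theta_pass (theta x q) l' end.

Fixpoint theta_chain x l : Prop :=
  match l with [] => True | q :: l' => theta x q = q /\ theta_chain q l' end.

Fixpoint delta_pass l : list P :=
  match l with [] => [] | q :: l' => wordD q l' :: delta_pass l' end.

Lemma theta_pass_weq x l : x :: l ≡ x :: theta_pass x l.
Proof.
  induction l as [|q l IH] in x |- *; [reflexivity|].
  cbn. now rewrite weq_theta, IH.
Qed.

Lemma theta_chain_pass x l : theta_chain x (theta_pass x l).
Proof.
  induction l as [|q l IH] in x |- *; cbn; [trivial|].
  split; [apply theta_theta_self | apply IH].
Qed.

Lemma delta_pass_weq x l : x :: l ≡ wordD x l :: delta_pass l.
Proof.
  induction l as [|q l IH] in x |- *; [reflexivity|].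
  cbn. now rewrite IH, weq_delta.
Qed.

Lemma wordD_fix x l : theta (wordD x l) x = wordD x l /\ delta (wordD x l) x = wordD x l.
Proof.
  destruct l; cbn; [rewrite theta_diag, delta_diag | rewrite theta_delta, delta_idem]; auto.
Qed.

Lemma chain_delta_pass x l : theta_chain x l -> chain P (wordD x l) (delta_pass l).
Proof.
  induction l as [|q l IH] in x |- *; cbn; [trivial|]. intros [Hxq Hl].
  destruct (wordD_fix q l) as [Htheta Hdelta].
  split; [split|auto].
  - symmetry; apply delta_delta_self.
  - symmetry; exact (theta_delta_below Hxq Htheta Hdelta).
Qed.

Lemma chain_exists x l : exists y m, chain P y m /\ x :: l ≡ y :: m.
Proof.
  exists (wordD x (theta_pass x l)), (delta_pass (theta_pass x l)). split.
  - apply chain_delta_pass, theta_chain_pass.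
  - etransitivity; [apply theta_pass_weq | apply delta_pass_weq].
Qed.

Lemma chain_wordD x l : chain P x l -> wordD x l = x.
Proof.
  induction l as [|q l IH] in x |- *; cbn; [reflexivity|].
  intros [[Hx _] Hc]. rewrite (IH q Hc). now symmetry.
Qed.

Lemma chain_wordR x l d : chain P x l -> wordR x l = last (x :: l) d.
Proof.
  induction l as [|q l IH] in x |- *; [reflexivity|].
  intros [[_ Hq] Hc]. unfold wordR; cbn [fold_left]. rewrite <- Hq. exact (IH q Hc).
Qed.


Lemma Fcar_ext (a b : Fcar P) : fcls a = fcls b -> a = b.
Proof. destruct a, b; cbn; intros ->; f_equal; apply proof_irrelevance. Qed.

Lemma cls_eqP (w w' : word P) : cls w = cls w' <-> wlist w ≡ wlist w'.
Proof.
  split; intros H.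
  - apply (f_equal (@fcls P)) in H. cbn in H. rewrite H. reflexivity.
  - apply Fcar_ext; cbn. apply functional_extensionality; intros l.
    apply propositional_extensionality. now rewrite H.
Qed.

Lemma rep_spec (a : Fcar P) : fcls a = weq P (wlist (rep a)).
Proof. unfold rep. now destruct constructive_indefinite_description. Qed.

Lemma cls_rep (a : Fcar P) : cls (rep a) = a.
Proof. apply Fcar_ext; cbn. symmetry; apply rep_spec. Qed.

Lemma rep_cls (w : word P) : wlist (rep (cls w)) ≡ wlist w.
Proof. apply cls_eqP, cls_rep. Qed.

Lemma Fmul_cls x l y m : Fmul (cls (x, l)) (cls (y, m)) = cls (x, l ++ y :: m).
Proof.
  apply cls_eqP.
  change (wlist (rep (cls (x, l))) ++ wlist (rep (cls (y, m))) ≡ wlist (x, l) ++ wlist (y, m)).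
  now rewrite !rep_cls.
Qed.

Lemma cls_cons x y l : cls (x, y :: l) = @mul (FreeDRC P) (eta x) (cls (y, l)).
Proof. symmetry; apply (Fmul_cls x [] y l). Qed.

Lemma chain_rep_spec (a : Fcar P) :
  chain P (fst (chain_rep a)) (snd (chain_rep a)) /\ fcls a (wlist (chain_rep a)).
Proof.
  unfold chain_rep. apply epsilon_spec.
  destruct (chain_exists (fst (rep a)) (snd (rep a))) as (y & m & Hc & Hw).
  exists (y, m). split; [exact Hc|]. rewrite rep_spec. exact Hw.
Qed.

Lemma Fcar_chain (a : Fcar P) : exists x l, chain P x l /\ a = cls (x, l).
Proof.
  destruct (chain_rep_spec a) as [Hc Hw]. revert Hc Hw.
  destruct (chain_rep a) as [x l]. intros Hc Hw. exists x, l. split; [exact Hc|].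
  rewrite <- (cls_rep a). apply cls_eqP. now rewrite rep_spec in Hw.
Qed.

Lemma FD_cls x l : FD (cls (x, l)) = cls (wordD x l, []).
Proof.
  unfold FD, xgen. destruct (chain_rep_spec (cls (x, l))) as [Hc Hw]. revert Hc Hw.
  destruct (chain_rep _) as [y m]. intros Hc Hw. cbn in Hc |- *. change (x :: l ≡ y :: m) in Hw.
  now rewrite (wordD_weq Hw), (chain_wordD Hc).
Qed.

Lemma FR_cls x l : FR (cls (x, l)) = cls (wordR x l, []).
Proof.
  unfold FR, xgen. destruct (chain_rep_spec (cls (x, l))) as [Hc Hw]. revert Hc Hw.
  destruct (chain_rep _) as [y m]. intros Hc Hw. cbn in Hc |- *. change (x :: l ≡ y :: m) in Hw.
  rewrite (wordR_weq Hw), (chain_wordR y Hc). now destruct m.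
Qed.


Lemma wordD_app x l y m : wordD x (l ++ y :: m) = wordD x (l ++ [wordD y m]).
Proof. induction l as [|z l IH] in x |- *; cbn; [reflexivity|]. now rewrite IH. Qed.

Lemma wordR_app x l m : wordR x (l ++ m) = wordR (wordR x l) m.
Proof. apply fold_left_app. Qed.

Lemma wordR_chain_fix s y m : chain P y m ->
  theta (wordR s (y :: m)) (wordR y m) = wordR s (y :: m) /\
  delta (wordR s (y :: m)) (wordR y m) = wordR s (y :: m).
Proof.
  induction m as [|z m IH] in s, y |- *; intros Hc.
  - exact (conj (theta_idem y s) (delta_theta y s)).
  - destruct Hc as [[_ Hz] Hc].
    change (wordR y (z :: m)) with (wordR (theta y z) m). rewrite <- Hz.
    exact (IH (theta s y) z Hc).
Qed.

Lemma weq_snoc_wordR x l : x :: l ++ [wordR x l] ≡ x :: l.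
Proof.
  induction l as [|q l IH] in x |- *; [apply weq_idem|].
  change (x :: q :: l ++ [wordR (theta x q) l] ≡ x :: q :: l).
  rewrite weq_theta, IH. symmetry. apply weq_theta.
Qed.

Lemma weq_sandwich x e : delta e x = e -> theta e x = e -> [x; e; x] ≡ [e].
Proof. intros Hd Ht. now rewrite weq_delta, Hd, weq_idem, weq_theta, Ht, weq_idem. Qed.

Lemma Fmul_assoc (a b c : Fcar P) : Fmul (Fmul a b) c = Fmul a (Fmul b c).
Proof.
  destruct (Fcar_chain a) as (x & l & _ & ->), (Fcar_chain b) as (y & m & _ & ->),
    (Fcar_chain c) as (z & n & _ & ->).
  now rewrite !Fmul_cls, <- app_assoc.
Qed.

Lemma FreeDRC_is_DRC : is_DRC (FreeDRC P).
Proof.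
  split; [exact Fmul_assoc|]. intros a b. cbn [mul opD opR FreeDRC].
  destruct (Fcar_chain a) as (x & l & Ha & ->), (Fcar_chain b) as (y & m & Hb & ->).
  repeat progress rewrite ?Fmul_cls, ?FD_cls, ?FR_cls.
  rewrite (chain_wordD Ha).
  repeat split.
  - apply cls_eqP, weq_idem.
  - apply cls_eqP, weq_snoc_wordR.
  - now rewrite wordD_app.
  - now rewrite wordR_app.
  - symmetry; apply cls_eqP. destruct (wordD_fix x (l ++ y :: m)).
    now apply weq_sandwich.
  - symmetry; apply cls_eqP. rewrite wordR_app.
    destruct (wordR_chain_fix (wordR x l) Hb). now apply weq_sandwich.
Qed.

Lemma eta_pa_hom_to_P : pa_hom_to_P P (FreeDRC P) eta.
Proof.
  split.
  - intros p. exists (eta p). exact (FD_cls p []).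
  - intros p q. unfold eta, xgen. cbn [mul opD opR FreeDRC].
    now rewrite !Fmul_cls, FD_cls, FR_cls.
Qed.

Lemma eta_inj p q : eta p = eta q -> p = q.
Proof. intros H%cls_eqP. exact (wordD_weq H). Qed.


Section Extension.
Variables (S : DRCops) (f : P -> S).
Hypotheses (HS : is_DRC S) (Hf : pa_hom_to_P P S f).

Lemma f_proj p : is_proj S (f p).                                Proof. apply Hf. Qed.
Lemma f_theta p q : f (theta q p) = opR (mul (f q) (f p)).       Proof. apply Hf. Qed.
Lemma f_delta p q : f (delta q p) = opD (mul (f p) (f q)).       Proof. apply Hf. Qed.

Lemma f_mul_theta p q : mul (f p) (f q) = mul (f p) (f (theta p q)).
Proof. rewrite f_theta. symmetry. exact (proj_mul_R HS _ (f_proj q)). Qed.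

Lemma f_mul_delta p q : mul (f p) (f q) = mul (f (delta q p)) (f q).
Proof. rewrite f_delta. symmetry. exact (proj_D_mul HS _ (f_proj p)). Qed.

Fixpoint wprod x l : S :=
  match l with [] => f x | y :: l' => mul (f x) (wprod y l') end.

Definition pact x (s : option S) : option S :=
  Some (match s with None => f x | Some a => mul (f x) a end).

Lemma fold_pact x l : fold_right pact None (x :: l) = Some (wprod x l).
Proof.
  induction l as [|y l IH] in x |- *; [reflexivity|].
  exact (f_equal (pact x) (IH y)).
Qed.

Lemma wprod_weq x l y m : x :: l ≡ y :: m -> wprod x l = wprod y m.
Proof.
  intros H. enough (Some (wprod x l) = Some (wprod y m)) by congruence.
  rewrite <- !fold_pact. apply fold_right_weq; [| | |exact H];
    intros p; [|intros q..]; intros [a|]; unfold pact; f_equal.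
  - now rewrite <- (mulA HS), (proj_idem HS (f_proj p)).
  - exact (proj_idem HS (f_proj p)).
  - now rewrite <- !(mulA HS), f_mul_theta.
  - apply f_mul_theta.
  - now rewrite <- !(mulA HS), f_mul_delta.
  - apply f_mul_delta.
Qed.

Lemma wprod_app x l y m : wprod x (l ++ y :: m) = mul (wprod x l) (wprod y m).
Proof.
  induction l as [|z l IH] in x |- *; cbn; [reflexivity|].
  now rewrite IH, (mulA HS).
Qed.

Lemma wprod_D x l : opD (wprod x l) = f (wordD x l).
Proof.
  induction l as [|y l IH] in x |- *; cbn; [exact (proj_D HS (f_proj x))|].
  rewrite (D_mulD HS), IH. symmetry. apply f_delta.
Qed.

Lemma wprod_R x l : opR (wprod x l) = f (wordR x l).
Proof.
  induction l as [|y l IH] using rev_ind; [exact (proj_R HS (f_proj x))|].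
  rewrite (wprod_app x l y []), (R_Rmul HS), IH, wordR_app. symmetry. apply f_theta.
Qed.

Definition Fext (a : FreeDRC P) : S := wprod (fst (rep a)) (snd (rep a)).

Lemma Fext_cls x l : Fext (cls (x, l)) = wprod x l.
Proof. apply wprod_weq, (rep_cls (x, l)). Qed.

Lemma Fext_eta p : Fext (eta p) = f p.
Proof. apply Fext_cls. Qed.

Lemma Fext_drc_hom : drc_hom (FreeDRC P) S Fext.
Proof.
  intros a b. cbn [mul opD opR FreeDRC].
  destruct (Fcar_chain a) as (x & l & _ & ->), (Fcar_chain b) as (y & m & _ & ->).
  rewrite Fmul_cls, FD_cls, FR_cls, !Fext_cls.
  split; [apply wprod_app | split; symmetry; [apply wprod_D | apply wprod_R]].
Qed.

Lemma Fext_unique (h : FreeDRC P -> S) :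
  drc_hom (FreeDRC P) S h -> (forall p, h (eta p) = f p) -> forall a, h a = Fext a.
Proof.
  intros Hh Heta a. destruct (Fcar_chain a) as (x & l & _ & ->). rewrite Fext_cls.
  induction l as [|y l IH] in x |- *; [apply Heta|].
  rewrite cls_cons, (proj1 (Hh _ _)), Heta, IH. reflexivity.
Qed.

End Extension.

End FreeSemigroup.

Lemma Fmor_Fext (P Q : PAops) (phi : P -> Q) : Fmor phi = Fext (fun p => eta (phi p)).
Proof.
  apply functional_extensionality; intros a. unfold Fmor, Fext.
  destruct (rep a) as [x l]; cbn.
  induction l as [|y l IH] in x |- *; [reflexivity|].
  cbn. rewrite <- IH. apply cls_cons.
Qed.

Lemma pa_hom_to_P_comp (P Q : PAops) (S : DRCops) (phi : P -> Q) (g : Q -> S) :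
  pa_hom P Q phi -> pa_hom_to_P Q S g -> pa_hom_to_P P S (fun p => g (phi p)).
Proof.
  intros Hphi [Hproj Hg]. split; [intros p; apply Hproj|].
  intros p q. destruct (Hphi p q) as [-> ->]. apply Hg.
Qed.

Theorem theorem8p13 :
  forall P : PAops, is_PA P ->
    (* F(P) is a DRC-semigroup *)
    is_DRC (FreeDRC P) /\
    (* functoriality of F and naturality of the unit *)
    (forall (Q : PAops), is_PA Q -> forall phi : P -> Q, pa_hom P Q phi ->
        drc_hom (FreeDRC P) (FreeDRC Q) (Fmor phi) /\ forall p, Fmor phi (eta p) = eta (phi p)) /\
    (* the unit η_P : P -> P(F(P)) is a projection algebra morphism *)
    pa_hom_to_P P (FreeDRC P) (@eta P) /\
    (* universal property: F ⊣ P *)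
    (forall S : DRCops, is_DRC S -> forall f : P -> S, pa_hom_to_P P S f ->
        exists! g : FreeDRC P -> S, drc_hom (FreeDRC P) S g /\ forall p, g (eta p) = f p) /\
    (* coreflectivity: the unit η_P is an isomorphism P ≅ P(F(P)) *)
    (forall p q : P, eta p = eta q -> p = q) /\
    (forall x : FreeDRC P, is_proj (FreeDRC P) x -> exists p : P, eta p = x).
Proof.
  intros P HP. split; [exact (FreeDRC_is_DRC HP)|]. split.
  { intros Q HQ phi Hphi. rewrite Fmor_Fext.
    pose proof (pa_hom_to_P_comp Hphi (eta_pa_hom_to_P HQ)) as Hf.
    split; [exact (Fext_drc_hom HP (FreeDRC_is_DRC HQ) Hf)|].
    intros p. exact (Fext_eta (FreeDRC_is_DRC HQ) Hf p). }
  split; [exact (eta_pa_hom_to_P HP)|]. split.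
  { intros S HS f Hf. exists (Fext f). split.
    - exact (conj (Fext_drc_hom HP HS Hf) (Fext_eta HS Hf)).
    - intros h [Hh Heta]. apply functional_extensionality; intros a.
      symmetry. exact (Fext_unique HP HS Hf Hh Heta a). }
  split; [exact (eta_inj HP)|].
  intros x [a <-]. exists (fst (chain_rep a)). reflexivity.
Qed.
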